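(* Let $P$ be an $n$-element poset written as $P=P_1+P_2+\cdots+P_k$ with each $P_i$ nonempty and not expressible as a disjoint sum of two nonempty posets. Suppose $|P_k|\ge|P_i|$ for all $i$, and that for some $0\le m\le k-1$ the components $P_1,\dots,P_m$ are singletons while none of $P_{m+1},\dots,P_{k-1}$ is a singleton. Then $\mathrm{ext}(P)\le \frac{n!}{n-m}$.
   Context: For a finite poset $P$, $\mathrm{ext}(P)$ denotes the number of linear extensions of $P$. The disjoint sum $P+Q$ of posets $P,Q$ is the poset on the disjoint union of their ground sets in which $x\le y$ iff $x,y$ lie in the same summand and are related there. *)

From HB Require Import structures.
From mathcomp Require Import all_boot all_order all_algebra.
Set Implicit Arguments. Unset Strict Implicit. Unset Printing Implicit Defensive.

Definition is_poset (T : finType) (le : rel T) : Prop :=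
  reflexive le /\ antisymmetric le /\ transitive le.

(* ext(P): number of linear extensions, i.e. of order-preserving
   bijections P -> {0,...,n-1}, n = |P|. *)
Definition ext (T : finType) (le : rel T) : nat :=
  #|[pred g : {ffun T -> 'I_#|T|} |
      injectiveb g && [forall x, forall y, le x y ==> (g x <= g y)%N]]|.

Definition decomposable (T : finType) (le : rel T) (A : {set T}) : Prop :=
  exists B C : {set T},
    [/\ B :|: C = A, [disjoint B & C], B != set0, C != set0 &
        forall x y, x \in B -> y \in C -> ~~ le x y && ~~ le y x].

(* The i-th summand of a decomposition given by a labelling c. *)
Definition block (T : finType) (k : nat) (c : T -> 'I_k) (i : 'I_k) : {set T} :=
  [set x | c x == i].

From HB Require Import structures.
From mathcomp Require Import all_boot all_order all_algebra.
From mathcomp Require Import zify.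
Set Implicit Arguments. Unset Strict Implicit. Unset Printing Implicit Defensive.
Import GRing.Theory Num.Theory.

(* Proof of ext(P) <= n!/(n-m) for P = P_1 + ... + P_k with indecomposable
   summands (only the incomparability of elements in different summands is
   used, not that le is an order).

   Let W(A) be the set of injective labellings g : P -> {0,...,n-1} that are
   monotone along every relation x <= y with x in A.  Then W(empty) has n!
   elements and W(P) is the set of linear extensions.  The heart of the proof
   is a rotation argument: given g in W(A + C) with C an indecomposable
   summand, cyclically shifting the values that g takes on C by t = 0..|C|-1
   yields |C| distinct elements of W(A), since two distinct shifts of
   monotone labellings of C would split C into the elements whose rank wraps
   around and the others, making C decomposable.  Hence
   |C| * |W(A + C)| <= |W(A)|, and adding the summands one at a time gives
   (prod_i |P_i|) * ext(P) <= n!.  Finally an arithmetic lemma (a sum of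
   numbers >= 2 is at most their product) shows n - m <= prod_i |P_i| under
   the hypotheses on the sizes of the summands. *)

Definition monotone_on (T : finType) (n : nat) (le : rel T) (A : {set T})
    (h : T -> 'I_n) : Prop :=
  forall x y, x \in A -> y \in A -> le x y -> h x <= h y.

Section RankRotation.
Variables (T : finType) (n : nat) (C : {set T}).
Implicit Types (h : {ffun T -> 'I_n}) (x y : T).

Definition vals h : seq nat := sort leq [seq val (h y) | y <- enum C].

Definition rank h x : nat := index (val (h x)) (vals h).

Definition rot h (t : nat) : {ffun T -> 'I_n} :=
  [ffun x => if x \in C
             then insubd (h x) (nth 0 (vals h) ((rank h x + t) %% #|C|))
             else h x].

Lemma size_vals h : size (vals h) = #|C|.
Proof. by rewrite /vals size_sort size_map cardE. Qed.

Lemma uniq_vals h : injective h -> uniq (vals h).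
Proof.
by move=> hi; rewrite sort_uniq map_inj_uniq ?enum_uniq // => x y /val_inj /hi.
Qed.

Lemma vals_in h x : x \in C -> val (h x) \in vals h.
Proof. by move=> xC; rewrite mem_sort; apply: map_f; rewrite mem_enum. Qed.

Lemma nth_vals h r : r < #|C| -> exists2 y, y \in C & nth 0 (vals h) r = val (h y).
Proof.
move=> rC; have : nth 0 (vals h) r \in vals h by rewrite mem_nth // size_vals.
by rewrite mem_sort => /mapP [y]; rewrite mem_enum => yC ->; exists y.
Qed.

Lemma rank_lt h x : x \in C -> rank h x < #|C|.
Proof. by move=> xC; rewrite -(size_vals h) index_mem vals_in. Qed.

Lemma nth_rank h x : x \in C -> nth 0 (vals h) (rank h x) = val (h x).
Proof. by move=> xC; rewrite nth_index // vals_in. Qed.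

Lemma rank_surj h r : injective h -> r < #|C| -> exists2 y, y \in C & rank h y = r.
Proof.
move=> hi rC; have [y yC e] := nth_vals h rC; exists y => //.
by rewrite /rank -e index_uniq ?size_vals ?uniq_vals.
Qed.

Lemma rank_mono h x y : injective h -> x \in C -> y \in C ->
  val (h x) <= val (h y) -> rank h x <= rank h y.
Proof.
move=> hi xC yC hxy; rewrite leqNgt; apply/negP => lt_yx.
have hyx := sorted_ltn_index leq_trans (sort_sorted leq_total _) _ _
  (vals_in h yC) (vals_in h xC) lt_yx.
have e : val (h x) = val (h y) by apply/eqP; rewrite eqn_leq hxy hyx.
by move: lt_yx; rewrite /rank e ltnn.
Qed.

Lemma rot_in h t x : x \in C ->
  val (rot h t x) = nth 0 (vals h) ((rank h x + t) %% #|C|).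
Proof.
move=> xC; rewrite ffunE xC.
have C0 : 0 < #|C| by apply/card_gt0P; exists x.
have [y _ ->] := nth_vals h (ltn_pmod (rank h x + t) C0).
by rewrite insubdK //; exact: ltn_ord.
Qed.

Lemma rot_out h t x : x \notin C -> rot h t x = h x.
Proof. by move=> xC; rewrite ffunE (negbTE xC). Qed.

Lemma rot_in_image h t x : x \in C -> exists2 y, y \in C & rot h t x = h y.
Proof.
move=> xC; have C0 : 0 < #|C| by apply/card_gt0P; exists x.
have [y yC e] := nth_vals h (ltn_pmod (rank h x + t) C0).
by exists y => //; apply: val_inj; rewrite rot_in.
Qed.

Lemma rot_inj h t : injective h -> injective (rot h t).
Proof.
move=> hi.
have mixed x y : x \in C -> y \notin C -> rot h t x <> rot h t y.
  move=> xC yNC; have [z zC ->] := rot_in_image h t xC.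
  by rewrite rot_out // => /hi ezy; move: yNC; rewrite -ezy zC.
move=> x y; case xC: (x \in C); case yC: (y \in C).
- have C0 : 0 < #|C| by apply/card_gt0P; exists x.
  move=> /(congr1 val); rewrite !rot_in // => /eqP.
  rewrite nth_uniq ?size_vals ?ltn_pmod ?uniq_vals // eqn_modDr.
  rewrite !modn_small ?rank_lt // => /eqP e.
  by apply/hi/val_inj; rewrite -(nth_rank h xC) -(nth_rank h yC) e.
- by move/mixed; rewrite xC yC => /(_ erefl erefl).
- by move/esym/mixed; rewrite xC yC => /(_ erefl erefl).
- by rewrite !rot_out ?xC ?yC // => /hi.
Qed.

Lemma vals_rot h t : injective h -> vals (rot h t) = vals h.
Proof.
move=> hi; apply/perm_sortP; [exact: leq_total | exact: leq_trans | exact: anti_leq |].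
have uniq_map (g : {ffun T -> 'I_n}) : injective g -> uniq [seq val (g y) | y <- enum C].
  by move=> gi; rewrite map_inj_uniq ?enum_uniq // => x y /val_inj /gi.
apply: uniq_perm; rewrite ?uniq_map //; first exact: rot_inj.
have sub : {subset [seq val (rot h t y) | y <- enum C] <= [seq val (h y) | y <- enum C]}.
  move=> v /mapP [y]; rewrite mem_enum => yC ->.
  by have [z zC ->] := rot_in_image h t yC; apply: map_f; rewrite mem_enum.
have := uniq_min_size (uniq_map _ (rot_inj (t := t) hi)) sub.
by rewrite !size_map => /(_ (leqnn _)) [].
Qed.

Lemma rank_rot h t x : injective h -> x \in C ->
  rank (rot h t) x = (rank h x + t) %% #|C|.
Proof.
move=> hi xC; have C0 : 0 < #|C| by apply/card_gt0P; exists x.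
by rewrite /rank vals_rot // rot_in // index_uniq ?size_vals ?uniq_vals ?ltn_pmod.
Qed.

Lemma rot_rot h a b : injective h -> rot (rot h a) b = rot h (a + b).
Proof.
move=> hi; apply/ffunP => x; case xC: (x \in C); last by rewrite !rot_out ?xC.
by apply: val_inj; rewrite !rot_in // vals_rot // rank_rot // modnDml addnA.
Qed.

Lemma rot_full h : rot h #|C| = h.
Proof.
apply/ffunP => x; case xC: (x \in C); last by rewrite !rot_out ?xC.
by apply: val_inj; rewrite rot_in // modnDr modn_small ?rank_lt ?nth_rank.
Qed.

Variable le : rel T.

(* Key lemma: if h and a nontrivial rotation of h are both monotone on C,
   then C splits into the elements whose rank wraps around (B) and the others
   (B'); no element of B is below one of B' (compare ranks under h), nor
   above one (compare ranks under the rotation), so C is decomposable. *)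
Lemma rot_monotone_decomposable h d : injective h ->
  monotone_on le C h -> monotone_on le C (rot h d) -> 0 < d < #|C| ->
  decomposable le C.
Proof.
move=> hi mono_h mono_rot /andP[d0 dC].
have hri : injective (rot h d) := rot_inj hi.
have C0 : 0 < #|C| := ltn_trans d0 dC.
exists [set x in C | #|C| <= rank h x + d], [set x in C | rank h x + d < #|C|].
split.
- by apply/setP => x; rewrite !inE; case: (x \in C); rewrite //=; case: leqP.
- rewrite disjoints_subset; apply/subsetP => x; rewrite !inE => /andP[_ wrap].
  by rewrite negb_and -leqNgt wrap orbT.
- apply/set0Pn; have [y yC ry] : exists2 y, y \in C & rank h y = #|C|.-1.
    by apply: rank_surj; rewrite ?ltn_predL.
  by exists y; rewrite inE yC ry /=; lia.
- apply/set0Pn; have [y yC ry] := rank_surj hi C0.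
  by exists y; rewrite inE yC ry /=; lia.
- move=> x y; rewrite !inE => /andP[xC wrap] /andP[yC nowrap].
  have rx_lt := rank_lt h xC; have ry_lt := rank_lt h yC.
  apply/andP; split; apply/negP => lexy.
  + by have := rank_mono hi xC yC (mono_h _ _ xC yC lexy); lia.
  + have := rank_mono hri yC xC (mono_rot _ _ yC xC lexy).
    rewrite !rank_rot // (modn_small nowrap) -[rank h x + d](subnK wrap) modnDr.
    by rewrite modn_small; lia.
Qed.

(* On an indecomposable set, a monotone labelling and the amount t < |C| are
   determined by the rotated labelling: otherwise h would be a nontrivial
   rotation of h', contradicting the key lemma. *)
Lemma rot_pair_inj h h' t t' : injective h -> injective h' ->
  monotone_on le C h -> monotone_on le C h' -> ~ decomposable le C ->
  t < #|C| -> t' < #|C| -> rot h t = rot h' t' -> h = h' /\ t = t'.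
Proof.
move=> hi hi' mono_h mono_h' indec.
wlog le_tt' : h h' t t' hi hi' mono_h mono_h' / t' <= t => [IH|] tC t'C e.
  case: (leqP t' t) => [|/ltnW] le_t; first exact: IH.
  by have [] := IH h' h t' t hi' hi mono_h' mono_h le_t t'C tC (esym e).
have back : h = rot h' (t' + (#|C| - t)).
  by rewrite -rot_rot // -e rot_rot // subnKC ?rot_full // ltnW.
case: (ltngtP t' t) le_tt' => // [lt_t't _ | eq_tt' _]; last first.
  by subst t'; rewrite back subnKC ?rot_full // ltnW.
apply: False_ind; apply/indec.
apply: (rot_monotone_decomposable (d := t' + (#|C| - t)) hi' mono_h').
- by rewrite -back.
- by apply/andP; split; lia.
Qed.
End RankRotation.

Section Counting.
Variables (T : finType) (n : nat) (le : rel T).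

Definition mono_labellings (A : {set T}) : {set {ffun T -> 'I_n}} :=
  [set g : {ffun T -> 'I_n} | injectiveb g &&
     [forall x, forall y, (x \in A) && le x y ==> (g x <= g y)]].

Lemma mono_labellingsP (A : {set T}) (g : {ffun T -> 'I_n}) :
  reflect (injective g /\ forall x y, x \in A -> le x y -> g x <= g y)
          (g \in mono_labellings A).
Proof.
rewrite inE; apply: (iffP andP) => [[/injectiveP gi /forallP mono]|[gi mono]].
  by split=> // x y xA lexy; move: (mono x) => /forallP/(_ y); rewrite xA lexy.
split; first exact/injectiveP.
by apply/forallP => x; apply/forallP => y; apply/implyP => /andP[xA /mono]; apply.
Qed.

(* Adding an indecomposable summand C to A divides the count by |C|: the map
   (g, t) |-> rot C g t injects W(A + C) x [0, |C|) into W(A). *)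
Lemma card_rotate_block (A C : {set T}) : [disjoint A & C] ->
  (forall x y, le x y -> (x \in C) = (y \in C)) -> ~ decomposable le C ->
  #|C| * #|mono_labellings (A :|: C)| <= #|mono_labellings A|.
Proof.
move=> disjAC closedC indec.
pose D := setX (mono_labellings (A :|: C)) [set: 'I_#|C|].
pose f (p : {ffun T -> 'I_n} * 'I_#|C|) := rot C p.1 p.2.
have monoC g : g \in mono_labellings (A :|: C) -> monotone_on le C g.
  by case/mono_labellingsP => _ mono x y xC _; apply: mono; rewrite inE xC orbT.
have f_inj : {in D &, injective f}.
  move=> [g r] [g' r']; rewrite !in_setX !in_setT !andbT /= => gW g'W e.
  have /mono_labellingsP [gi _] := gW; have /mono_labellingsP [g'i _] := g'W.
  have [-> er] := rot_pair_inj gi g'i (monoC _ gW) (monoC _ g'W) indec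
                                (ltn_ord r) (ltn_ord r') e.
  by congr (_, _); apply: val_inj.
have f_sub : f @: D \subset mono_labellings A.
  apply/subsetP => h /imsetP [[g r]]; rewrite in_setX in_setT andbT /= => gW ->.
  have /mono_labellingsP [gi mono] := gW.
  apply/mono_labellingsP; split; first exact: rot_inj.
  move=> x y xA lexy.
  have xNC : x \notin C by rewrite (disjointFr disjAC xA).
  have yNC : y \notin C by rewrite -(closedC _ _ lexy).
  by rewrite /f /= !rot_out //; apply: mono; rewrite // inE xA.
have cardD : #|D| = #|mono_labellings (A :|: C)| * #|C|.
  by rewrite cardsX cardsT card_ord.
by rewrite mulnC -cardD -(card_in_imset f_inj); apply: subset_leq_card.
Qed.

Lemma card_mono_labellings0 : #|mono_labellings set0| = n ^_ #|T|.
Proof.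
rewrite -[in RHS](card_ord n) -card_inj_ffuns; apply: eq_card => g.
rewrite !inE; case: injectiveb => //=.
by apply/forallP => x; apply/forallP => y; rewrite inE.
Qed.
End Counting.

Lemma ext_mono_labellings (T : finType) (le : rel T) :
  ext le = #|mono_labellings #|T| le setT|.
Proof.
apply: eq_card => g; rewrite !inE; congr (_ && _).
by apply: eq_forallb => x; apply: eq_forallb => y; rewrite inE.
Qed.

Section Blocks.
Variables (T : finType) (le : rel T) (k : nat) (c : T -> 'I_k).

Lemma card_blocks : #|T| = \sum_(i < k) #|block c i|.
Proof.
rewrite -sum1_card (partition_big c predT) //=; apply: eq_bigr => i _.
by rewrite sum1_card; apply: eq_card => x; rewrite !inE.
Qed.

Hypothesis c_compat : forall x y, le x y -> c x = c y.
Hypothesis blocks_indec : forall i, ~ decomposable le (block c i).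

(* (prod_i |P_i|) * ext(P) <= n!: add the summands P_0, P_1, ... one at a
   time to the constrained region [set x | c x < j]. *)
Lemma prod_blocks_ext : (\prod_(i < k) #|block c i|) * ext le <= #|T|`!.
Proof.
pose W j := mono_labellings #|T| le [set x | c x < j].
have step j (jk : j < k) : #|block c (Ordinal jk)| * #|W j.+1| <= #|W j|.
  rewrite /W.
  have -> : [set x | c x < j.+1] = [set x | c x < j] :|: block c (Ordinal jk).
    by apply/setP => x; rewrite !inE -val_eqE ltnS leq_eqVlt orbC.
  apply: card_rotate_block; last exact: blocks_indec.
    rewrite disjoints_subset; apply/subsetP => x; rewrite !inE => xj.
    by apply/eqP => cx; rewrite cx ltnn in xj.
  by move=> x y /c_compat cxy; rewrite !inE cxy.
have iter j : j <= k -> (\prod_(i < k | i < j) #|block c i|) * #|W j| <= #|W 0|.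
  elim: j => [|j IH] jk; first by rewrite big_pred0 ?mul1n.
  rewrite (bigD1 (Ordinal jk)) //= -mulnA.
  have -> : \prod_(i < k | (i < j.+1) && (i != Ordinal jk)) #|block c i| =
            \prod_(i < k | i < j) #|block c i|.
    by apply: eq_bigl => i; rewrite ltnS ltn_neqAle andbC -val_eqE.
  by apply: leq_trans (IH (ltnW jk)); rewrite mulnCA leq_mul2l step orbT.
have W0 : W 0 = mono_labellings #|T| le set0.
  by congr mono_labellings; apply/setP => x; rewrite !inE.
have Wk : W k = mono_labellings #|T| le setT.
  by congr mono_labellings; apply/setP => x; rewrite !inE ltn_ord.
have := iter k (leqnn k).
rewrite (eq_bigl xpredT) => [|i]; last exact: ltn_ord.
by rewrite W0 Wk card_mono_labellings0 ffactnn ext_mono_labellings.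
Qed.
End Blocks.

Lemma sum_le_prod (I : eqType) (r : seq I) (F : I -> nat) :
  {in r, forall i, 1 < F i} -> \sum_(i <- r) F i <= \prod_(i <- r) F i.
Proof.
move=> F2; suff [] : [/\ \sum_(i <- r) F i <= \prod_(i <- r) F i,
                        \sum_(i <- r) F i != 1 & 0 < \prod_(i <- r) F i] by [].
elim: r F2 => [|i r IH] F2; first by rewrite !big_nil.
have Fi := F2 i (mem_head i r).
have [] := IH (fun j jr => F2 j (@mem_behead _ (i :: r) j jr)).
rewrite !big_cons; set S := \sum_(j <- r) F j; set P := \prod_(j <- r) F j.
by move=> SP S1 P0; split; nia.
Qed.

Lemma sum_sub_singletons_le_prod (s : nat -> nat) (k m : nat) : m < k ->
  (forall i, i < m -> s i = 1) -> (forall i, m <= i < k.-1 -> 1 < s i) ->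
  s m <= s k.-1 ->
  \sum_(0 <= i < k) s i - m <= \prod_(0 <= i < k) s i.
Proof.
move=> mk s1 s2 s_last.
rewrite (big_cat_nat (leq0n m) (ltnW mk)).
rewrite [in X in _ <= X](big_cat_nat (leq0n m) (ltnW mk)) /=.
have -> : \sum_(0 <= i < m) s i = m.
  rewrite (eq_big_nat _ _ (F2 := fun=> 1)) => [|i /andP[_ /s1] //].
  by rewrite sum_nat_const_nat muln1 subn0.
have -> : \prod_(0 <= i < m) s i = 1.
  by rewrite big_nat_cond big1 // => i /andP[/andP[_ /s1]].
rewrite addKn mul1n; case: (ltnP m k.-1) => [mk1 | km1]; last first.
  have -> : k = m.+1 by lia.
  by rewrite !big_nat1.
apply: sum_le_prod => i; rewrite mem_index_iota => /andP[mi ik].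
case: (ltnP i k.-1) => [ik1 | ki]; first by apply: s2; rewrite mi.
have -> : i = k.-1 by lia.
by apply: leq_trans s_last; apply: s2; rewrite leqnn.
Qed.


Theorem lemma6p2 (T : finType) (le : rel T) (k m : nat) (c : T -> 'I_k) :
  is_poset le ->
  (* P = P_1 + ... + P_k : comparable elements lie in the same summand *)
  (forall x y, le x y -> c x = c y) ->
  (forall i, block c i != set0) ->
  (forall i, ~ decomposable le (block c i)) ->
  (* |P_k| >= |P_i| (P_k is the summand with index k-1) *)
  (forall i j : 'I_k, val j = k.-1 -> #|block c i| <= #|block c j|)%N ->
  (m <= k - 1)%N -> (0 < k)%N ->
  (forall i : 'I_k, (i < m)%N -> #|block c i| = 1%N) ->
  (forall i : 'I_k, (m <= i)%N -> (i < k.-1)%N -> #|block c i| != 1%N) ->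
  ((ext le)%:R <= (#|T|`!)%:R / (#|T| - m)%:R :> rat)%R.
Proof.
move=> _ c_compat nonempty indec last_max m_le k_gt0 singles nonsingles.
have mk : m < k by lia.
(* Sizes of the summands, indexed by nat for the arithmetic lemma. *)
pose s j := #|[set x | val (c x) == j]|.
have s_block (i : 'I_k) : #|block c i| = s i.
  by apply: eq_card => x; rewrite !inE val_eqE.
have k_le_n : k <= #|T|.
  rewrite (card_blocks c) -[k in k <= _]card_ord -sum1_card.
  by apply: leq_sum => i _; rewrite card_gt0.
have sizes : #|T| - m <= \prod_(0 <= i < k) s i.
  have -> : #|T| = \sum_(0 <= i < k) s i.
    by rewrite big_mkord (card_blocks c); apply: eq_bigr => i _; rewrite s_block.
  apply: sum_sub_singletons_le_prod => // [i im | i /andP[mi ik] |].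
  - by rewrite -(s_block (Ordinal (ltn_trans im mk))) singles.
  - have ik' : i < k by lia.
    have := nonsingles (Ordinal ik') mi ik; have := nonempty (Ordinal ik').
    by rewrite -card_gt0 s_block /=; lia.
  - have k1 : k.-1 < k by lia.
    by rewrite -(s_block (Ordinal mk)) -(s_block (Ordinal k1)); apply: last_max.
have bound : ext le * (#|T| - m) <= #|T|`!.
  apply: leq_trans (prod_blocks_ext c_compat indec).
  rewrite (big_mkord xpredT s) in sizes.
  by rewrite mulnC leq_mul2r (eq_bigr _ (fun i _ => s_block i)) sizes orbT.
have m_lt_n : m < #|T| by lia.
by rewrite ler_pdivlMr ?ltr0n ?subn_gt0 // -natrM ler_nat.
Qed.
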